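(* For every integer $n \geq 1$, let $r(n)$ be the number of three-candidate ballot sequences of length $n$ whose numbers $m_A, m_B, m_C$ of $A$'s, $B$'s and $C$'s satisfy $m_A \equiv m_B \equiv m_C \pmod 2$, and let $M(n)$ be the total number of three-candidate ballot sequences of length $n$. Then $M(n) = r(n) + r(n+1)$.
   Context: A three-candidate ballot sequence of length $n$ is a word $b_1\cdots b_n$ with $b_i\in\{A,B,C\}$ such that in every prefix $b_1\cdots b_k$ ($1\le k\le n$) the number of $A$'s is at least the number of $B$'s, which is at least the number of $C$'s. *)

From HB Require Import structures.
From mathcomp Require Import all_boot.
Set Implicit Arguments. Unset Strict Implicit. Unset Printing Implicit Defensive.

Inductive cand := A | B | C.

Definition cand_enc (x : cand) : 'I_3 :=
  match x with A => inord 0 | B => inord 1 | C => inord 2 end.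
Definition cand_dec (i : 'I_3) : cand :=
  match val i with 0 => A | 1 => B | _ => C end.
Lemma cand_encK : cancel cand_enc cand_dec.
Proof. by case; rewrite /cand_dec /= inordK. Qed.
HB.instance Definition _ := Finite.copy cand (can_type cand_encK).

Definition occ (x : cand) (s : seq cand) : nat := count_mem x s.

Definition ballot (s : seq cand) : bool :=
  [forall k : 'I_(size s).+1,
     (0 < k) ==> ((occ B (take k s) <= occ A (take k s)) &&
                  (occ C (take k s) <= occ B (take k s)))].

Definition M (n : nat) : nat := #|[set w : n.-tuple cand | ballot w]|.

Definition r (n : nat) : nat :=
  #|[set w : n.-tuple cand | ballot w &&
      [&& odd (occ A w) == odd (occ B w) & odd (occ B w) == odd (occ C w)]]|.

From mathcomp Require Import all_boot.

Set Implicit Arguments.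
Unset Strict Implicit.
Unset Printing Implicit Defensive.

(* A ballot word whose letter counts do not all have the same parity becomes
   one that does by appending a single letter, and exactly one letter does
   this: C if only m_C has the odd parity out, B if only m_B does, A
   otherwise.  The extended word is still a ballot word, since the count that
   grows differs in parity from, hence is strictly below, the count it must
   not exceed.  Conversely, deleting the last letter of a nonempty balanced
   ballot word gives an unbalanced one.  So the unbalanced ballot words of
   length n are counted by r(n+1), the balanced ones by r(n), and together
   they make up all M(n) ballot words. *)

Definition ballot_counts (s : seq cand) : bool :=
  occ C s <= occ B s <= occ A s.

Definition balanced (s : seq cand) : bool :=
  (odd (occ A s) == odd (occ B s)) && (odd (occ B s) == odd (occ C s)).

Definition balancing_cand (s : seq cand) : cand :=
  if odd (occ A s) == odd (occ B s) then C
  else if odd (occ A s) == odd (occ C s) then B else A.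

Lemma cand_eqE :
  ((A == A) = true) * ((B == B) = true) * ((C == C) = true) *
  ((A == B) = false) * ((A == C) = false) * ((B == A) = false) *
  ((B == C) = false) * ((C == A) = false) * ((C == B) = false).
Proof. by do !split; apply/eqP. Qed.

Lemma occ_rcons x s y : occ x (rcons s y) = occ x s + (y == x).
Proof. by rewrite /occ -cats1 count_cat /= addn0. Qed.

Lemma ballotE s :
  ballot s = all (fun k => ballot_counts (take k s)) (iota 1 (size s)).
Proof.
apply/forallP/allP => [Hs k | Hs k].
- rewrite mem_iota add1n => /andP [k_gt0 k_lt].
  by have /implyP := Hs (Ordinal k_lt); rewrite /= k_gt0 andbC; apply.
- apply/implyP => k_gt0; rewrite andbC; apply: Hs.
  by rewrite mem_iota k_gt0 add1n ltn_ord.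
Qed.

Lemma ballot_rcons s y :
  ballot (rcons s y) = ballot s && ballot_counts (rcons s y).
Proof.
rewrite !ballotE size_rcons -[(size s).+1]addn1 iotaD all_cat /= andbT add1n.
rewrite take_oversize ?size_rcons //; congr andb.
apply: eq_in_all => k; rewrite mem_iota => /andP [_ k_le].
by rewrite -cats1 takel_cat // -ltnS -add1n.
Qed.

Lemma ballot_counts_ballot s : ballot s -> ballot_counts s.
Proof. by case/lastP: s => // s y; rewrite ballot_rcons => /andP []. Qed.

Lemma ltn_odd_neq m n : m <= n -> odd m != odd n -> m < n.
Proof.
by rewrite ltn_neqAle => -> neq_odd; rewrite andbT; apply: contraNneq neq_odd => ->.
Qed.

Lemma ballot_rcons_balancing s :
  ballot s -> ~~ balanced s ->
  ballot (rcons s (balancing_cand s)) && balanced (rcons s (balancing_cand s)).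
Proof.
move=> bs; rewrite ballot_rcons bs /=.
move: (ballot_counts_ballot bs); rewrite /ballot_counts /balanced /balancing_cand.
rewrite !occ_rcons; move: (occ A s) (occ B s) (occ C s) => a b c /andP [cb ba].
have [lt_cb lt_ba] := (ltn_odd_neq cb, ltn_odd_neq ba).
case oa: (odd a); case ob: (odd b); case oc: (odd c) => //= _;
  rewrite !cand_eqE /= !addn0 !addn1 /= ?oa ?ob ?oc ?cb ?ba ?leqW //= ?andbT.
all: by [apply: lt_cb; rewrite ?ob ?oc | apply: lt_ba; rewrite ?oa ?ob].
Qed.

Lemma ballot_rcons_balanced s y :
  ballot (rcons s y) -> balanced (rcons s y) ->
  [&& ballot s, ~~ balanced s & balancing_cand s == y].
Proof.
rewrite ballot_rcons /balanced /balancing_cand !occ_rcons => /andP [-> _].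
by case: y; rewrite !cand_eqE ?addn0 ?addn1 /=;
  case: (odd (occ A s)) (odd (occ B s)) (odd (occ C s)) => [] [] [] //=.
Qed.

Definition balance_tuple n (w : n.-tuple cand) : n.+1.-tuple cand :=
  [tuple of rcons w (balancing_cand w)].

Lemma balance_tuple_inj n : injective (@balance_tuple n).
Proof. by move=> w1 w2 /(congr1 val) /rcons_inj [] /val_inj. Qed.

Lemma card_ballot_unbalanced n :
  #|[set w : n.-tuple cand | ballot w && ~~ balanced w]| = r n.+1.
Proof.
rewrite -(card_imset _ (@balance_tuple_inj n)) /r; apply: eq_card => t.
rewrite [in RHS]inE; apply/imsetP/andP => [[w] | [bt balt]].
  by rewrite inE => /andP [bw nbw] ->; apply/andP/ballot_rcons_balancing.
case/lastP E: (tval t) (size_tuple t) => [|s y] //; rewrite size_rcons => -[sz_s].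
rewrite E in bt balt; have /and3P [bs nbs /eqP fy] := ballot_rcons_balanced bt balt.
have sz_s' : size s == n by rewrite sz_s.
by exists (Tuple sz_s'); rewrite ?inE ?bs ?nbs //; apply: val_inj; rewrite /= E fy.
Qed.

Theorem mainTheorem5 (n : nat) : 1 <= n -> M n = r n + r n.+1.
Proof.
move=> _; rewrite /M -(cardsID [set w : n.-tuple cand | balanced w]).
rewrite setDE -setIdE -card_ballot_unbalanced.
by congr addn; apply: eq_card => w; rewrite !inE.
Qed.
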